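(* Let $n\ge 1$ and let $\underline x=(a_1,\ldots,a_m)$ and $\underline y=(b_1,\ldots,b_t)$ be compositions of $n$. Then the meander $M(\underline x\mid\underline y)$ is a single path (i.e. it is connected, has no cycles, and is a path through all $n$ vertices) if and only if the meander permutation $\sigma_{\underline x,\underline y}$ is an $n$-cycle in the symmetric group $S_n$.
   Context: A composition of $n$ is a sequence $(a_1,\ldots,a_m)$ of nonnegative integers with $\sum a_i=n$. The meander $M(\underline x\mid\underline y)$ is the graph on vertices $1,2,\ldots,n$ (placed in order on a horizontal line) with the following edges. Top edges: for each part $a_k$ of $\underline x$, with $s=a_1+\cdots+a_{k-1}$, join $s+j$ to $s+a_k+1-j$ for $1\le j\le\lfloor a_k/2\rfloor$ (drawn as arcs above the line). Bottom edges: the same construction using the parts $b_k$ of $\underline y$ (drawn as arcs below the line). The modified meander $M'(\underline x\mid\underline y)$ is obtained from $M(\underline x\mid\underline y)$ by adding, for each odd $a_k$, a top loop at vertex $a_1+\cdots+a_{k-1}+\lceil a_k/2\rceil$, and for each odd $b_k$, a bottom loop at vertex $b_1+\cdots+b_{k-1}+\lceil b_k/2\rceil$; thus every vertex of $M'$ is incident with exactly one top edge or top loop and exactly one bottom edge or bottom loop. The top bijection $t$ of $\{1,\ldots,n\}$ sends $i$ to the other endpoint of the top edge at $i$, and $t(i)=i$ if $i$ carries a top loop; the bottom bijection $b$ is defined analogously with bottom edges/loops. The meander permutation is $\sigma_{\underline x,\underline y}=t\circ b\in S_n$, i.e. $\sigma_{\underline x,\underline y}(i)=t(b(i))$. *)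

From mathcomp Require Import all_boot all_fingroup.
Set Implicit Arguments. Unset Strict Implicit. Unset Printing Implicit Defensive.

(* Vertices 1..n of the paper are encoded 0-indexed as 'I_n (vertex v <-> v+1).
   A composition is a seq nat (nonnegative parts) with sumn = n. *)

(* Reflection within the block of x containing v: a block occupying the
   0-indexed positions s, ..., s+a-1 sends v to 2s+a-1-v.  This is exactly
   the top/bottom bijection of the paper (centres of odd blocks, which carry
   the loops of M', are fixed). Vertices beyond sumn x are fixed. *)
Fixpoint block_refl (x : seq nat) (v : nat) : nat :=
  match x with
  | [::] => v
  | a :: x' => if v < a then a.-1 - v else a + block_refl x' (v - a)
  end.

Definition block_fun (n : nat) (x : seq nat) (i : 'I_n) : 'I_n :=
  insubd i (block_refl x i).

(* the meander permutation sigma = t o b as a function *)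
Definition meander_fun (n : nat) (x y : seq nat) (i : 'I_n) : 'I_n :=
  block_fun x (block_fun y i).

(* the meander permutation as an element of S_n; when x and y are
   compositions of n the function is injective, so this is the genuine
   permutation (the fallback 1 is never used under the theorem's hypotheses) *)
Definition meander_perm (n : nat) (x y : seq nat) : {perm 'I_n} :=
  match @idP (injectiveb (@meander_fun n x y)) with
  | ReflectT h => perm (injectiveP _ h)
  | ReflectF _ => 1%g
  end.

Definition is_full_cycle (n : nat) (s : {perm 'I_n}) : Prop :=
  forall i : 'I_n, porbit s i = [set: 'I_n].

(* Top and bottom arcs joining the same pair are kept as two parallel edges. *)
Definition arc_edges (n : nat) (x : seq nat) : seq {set 'I_n} :=
  [seq [set i; block_fun x i] | i : 'I_n <- enum 'I_n & (i < block_fun x i)%N].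

Definition meander_edges (n : nat) (x y : seq nat) : seq {set 'I_n} :=
  arc_edges n x ++ arc_edges n y.

Definition is_path_graph (n : nat) (E : seq {set 'I_n}) : Prop :=
  exists (v0 : 'I_n) (p : seq 'I_n),
    perm_eq (v0 :: p) (enum 'I_n) /\
    perm_eq E (pairmap (fun u v => [set u; v]) v0 p).

From mathcomp Require Import all_boot all_fingroup zify.
Set Implicit Arguments. Unset Strict Implicit. Unset Printing Implicit Defensive.

(* The top and bottom bijections t and b are involutions, and the meander is
   the union of their matchings of arcs.  Along a path through all vertices the
   arcs alternate between t and b and each end of the path is fixed by the
   involution not used there, so the path is the walk p, t p, b t p, ... from a
   b-fixed point p; its vertices are the points sigma^j p and sigma^-j p, hence
   they form a single sigma-orbit.  Conversely, if sigma is an n-cycle then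
   b c = sigma^k c for any vertex c, and sigma^(k/2) c or sigma^((k+1)/2) c is
   fixed by b or t according to the parity of k; the alternating walk from that
   point p visits p, sigma p, sigma^-1 p, sigma^2 p, ..., i.e. every vertex once,
   and uses every arc. *)

Lemma block_refl_lt x v : v < sumn x -> block_refl x v < sumn x.
Proof.
elim: x v => [|a x IH] v //=.
case: ifP => lt_va lt_v; first lia.
by have := IH (v - a); lia.
Qed.

Lemma block_reflK x v : v < sumn x -> block_refl x (block_refl x v) = v.
Proof.
elim: x v => [|a x IH] v //= lt_v.
case: (ltnP v a) => lt_va /=.
  by rewrite ifT; lia.
have -> : (a + block_refl x (v - a) < a) = false by lia.
by rewrite addKn IH; lia.
Qed.

Lemma block_funE n x (i : 'I_n) : sumn x = n -> val (block_fun x i) = block_refl x i.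
Proof. by move=> sx; rewrite val_insubd; have := @block_refl_lt x i; rewrite sx => ->. Qed.

Lemma block_fun_involutive n x : sumn x = n -> involutive (@block_fun n x).
Proof.
by move=> sx i; apply: val_inj; rewrite !block_funE // block_reflK // sx.
Qed.

Lemma meander_permE n x y i : sumn x = n -> sumn y = n ->
  meander_perm n x y i = block_fun x (block_fun y i).
Proof.
move=> sx sy; rewrite /meander_perm.
case: {-}_ / idP => [inj_m|[]]; first by rewrite permE.
apply/injectiveP => i1 i2 /(can_inj (block_fun_involutive sx)).
exact/(can_inj (block_fun_involutive sy)).
Qed.

Lemma set2_inj (T : finType) (a b c d : T) :
  [set a; b] = [set c; d] -> (a = c /\ b = d) \/ (a = d /\ b = c).
Proof.
move=> E.
have : a \in [set c; d] by rewrite -E set21.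
have : b \in [set c; d] by rewrite -E set22.
have : c \in [set a; b] by rewrite E set21.
have : d \in [set a; b] by rewrite E set22.
by rewrite !inE; do 4 (case/orP => /eqP ?); subst; auto.
Qed.

Section Arcs.
Variable n : nat.
Implicit Types (f : 'I_n -> 'I_n) (w : nat -> 'I_n).

Definition arcs f : seq {set 'I_n} :=
  [seq [set i; f i] | i : 'I_n <- enum 'I_n & (i < f i)%N].

Lemma arc_edgesE x : arc_edges n x = arcs (block_fun x). Proof. by []. Qed.

Lemma mem_arcsP f e : e \in arcs f -> exists2 u, f u != u & e = [set u; f u].
Proof.
case/mapP => u; rewrite mem_filter mem_enum andbT => lt_u ->.
by exists u => //; apply: contraTneq lt_u => ->; rewrite ltnn.
Qed.

Lemma mem_arcs f u : involutive f -> f u != u -> [set u; f u] \in arcs f.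
Proof.
move=> fK fu_neq; case: (ltngtP u (f u)) => [lt_u|lt_fu|/val_inj eq_u].
- by apply/mapP; exists u; rewrite // mem_filter mem_enum lt_u.
- apply/mapP; exists (f u); first by rewrite mem_filter mem_enum fK lt_fu.
  by rewrite fK setUC.
- by rewrite -eq_u eqxx in fu_neq.
Qed.

Lemma arc_involutionE f a b u : involutive f -> [set a; b] = [set u; f u] -> f a = b.
Proof. by move=> fK /set2_inj [[-> ->]|[-> ->]] //; rewrite fK. Qed.

Lemma uniq_arcs f : uniq (arcs f).
Proof.
rewrite map_inj_in_uniq => [|u v]; first by rewrite filter_uniq //; exact: enum_uniq.
rewrite !mem_filter => /andP[lt_u _] /andP[lt_v _] /set2_inj [[]|[eq_uv eq_fuv]] //.
rewrite eq_fuv in lt_u; rewrite -eq_uv in lt_v.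
by move: (ltn_trans lt_u lt_v); rewrite ltnn.
Qed.

Definition path_edges w : seq {set 'I_n} := [seq [set w k; w k.+1] | k <- iota 0 n.-1].

Lemma perm_enum_injective_below w :
  {in gtn n &, injective w} -> perm_eq [seq w i | i <- iota 0 n] (enum 'I_n).
Proof.
move=> w_inj; have w_uniq : uniq [seq w i | i <- iota 0 n].
  by rewrite map_inj_in_uniq ?iota_uniq // => i j; rewrite !mem_iota; apply: w_inj.
apply: uniq_perm => //; first exact: enum_uniq.
apply: (uniq_min_size w_uniq _ _).2 => [v _|]; first by rewrite mem_enum.
by rewrite size_enum_ord size_map size_iota.
Qed.

Lemma injective_below_surj w :
  {in gtn n &, injective w} -> forall v, exists2 i, i < n & w i = v.
Proof.
move=> w_inj v; have := mem_enum 'I_n v.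
rewrite -(perm_mem (perm_enum_injective_below w_inj)) => /mapP[i].
by rewrite mem_iota => /andP[_ lt_i] ->; exists i.
Qed.

Lemma uniq_path_edges w : {in gtn n &, injective w} -> uniq (path_edges w).
Proof.
move=> w_inj; rewrite map_inj_in_uniq ?iota_uniq // => k1 k2.
rewrite !mem_iota !add0n => /andP[_ lt_k1] /andP[_ lt_k2].
case/set2_inj => [[eq_w _]|[eq1 eq2]].
  by apply: (w_inj _ _ _ _ eq_w); rewrite inE; lia.
have e1 := w_inj k1 k2.+1; have e2 := w_inj k1.+1 k2; rewrite !inE in e1 e2.
by have := e1 ltac:(lia) ltac:(lia) eq1; have := e2 ltac:(lia) ltac:(lia) eq2; lia.
Qed.

Lemma pairmap_iota w a m :
  pairmap (fun u v => [set u; v]) (w a) [seq w i | i <- iota a.+1 m] =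
  [seq [set w k; w k.+1] | k <- iota a m].
Proof. by elim: m a => [|m IH] a //=; rewrite IH. Qed.

Lemma is_path_graphP E : 0 < n ->
  is_path_graph E <-> exists2 w, {in gtn n &, injective w} & perm_eq E (path_edges w).
Proof.
move=> n_gt0; split.
  case=> v0 [p [perm_p perm_E]].
  have size_p : size (v0 :: p) = n by rewrite (perm_size perm_p) size_enum_ord.
  have uniq_p : uniq (v0 :: p) by rewrite (perm_uniq perm_p) enum_uniq.
  exists (nth v0 (v0 :: p)).
    move=> i j; rewrite !inE => lt_i lt_j /eqP.
    by rewrite nth_uniq ?size_p // => /eqP.
  rewrite /path_edges.
  have -> : n.-1 = size p by apply/eqP; rewrite -eqSS prednK //; apply/eqP.
  by rewrite -pairmap_iota map_nth_iota ?subn1 // [drop _ _]/= drop0 take_size.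
case=> w w_inj perm_E; exists (w 0), [seq w i | i <- iota 1 n.-1]; split.
  have iotaE : iota 0 n = 0 :: iota 1 n.-1 by rewrite -{1}(prednK n_gt0).
  by have := perm_enum_injective_below w_inj; rewrite iotaE.
by rewrite pairmap_iota.
Qed.

End Arcs.

Lemma iter_porbit_inj (T : finType) (s : {perm T}) x i j :
  i < #|porbit s x| -> j < #|porbit s x| -> iter i s x = iter j s x -> i = j.
Proof.
move=> lt_i lt_j eq_ij; apply/eqP.
rewrite -(nth_uniq x _ _ (uniq_traject_porbit s x)) ?size_traject //.
by rewrite !nth_traject // eq_ij.
Qed.

Lemma iter_permK (T : finType) (s : {perm T}) k x : iter k (s^-1)%g (iter k s x) = x.
Proof. by rewrite -!permX expVgn permK. Qed.

Section Zigzag.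
Variable n : nat.
Variables f g : 'I_n -> 'I_n.
Hypotheses (fK : involutive f) (gK : involutive g).
Variable s : {perm 'I_n}.
Hypothesis sE : forall i, s i = f (g i).

Definition turn (b : bool) : 'I_n -> 'I_n := if b then g else f.

Lemma turnK b : involutive (turn b). Proof. by case: b. Qed.

Fixpoint zigzag (e : 'I_n) (k : nat) : 'I_n :=
  if k is k'.+1 then turn (odd k') (zigzag e k') else e.

Lemma sVE i : (s^-1)%g i = g (f i).
Proof. by apply: (@perm_inj _ s); rewrite permKV sE gK fK. Qed.

Lemma mem_arcs_turn b u : turn b u != u -> [set u; turn b u] \in arcs f ++ arcs g.
Proof. by rewrite mem_cat; case: b => moved; rewrite mem_arcs ?orbT. Qed.

Lemma mem_arcs_turnP a :
  a \in arcs f ++ arcs g -> exists b u, turn b u != u /\ a = [set u; turn b u].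
Proof.
rewrite mem_cat => /orP[] /mem_arcsP[u moved ->].
  by exists false, u.
by exists true, u.
Qed.

Lemma porbit_fixpoint c : g c \in porbit s c -> exists e, g e = e \/ f e = e.
Proof.
case/porbitP => k; rewrite permX -(odd_double_half k) => gc.
have g_iter j y : g (iter j s y) = iter j (s^-1)%g (g y).
  by elim: j => //= j IH; rewrite -IH sVE sE.
case: (odd k) gc => /= gc.
- exists (iter (k./2).+1 s c); right.
  have fE y : f y = s (g y) by rewrite sE gK.
  rewrite fE g_iter gc.
  by rewrite add0n -addnn -iterS -addSn iterD iter_permK.
- exists (iter k./2 s c); left.
  by rewrite g_iter gc add0n -addnn iterD iter_permK.
Qed.

Section FixedStart.
Variable e : 'I_n.
Hypothesis ge : g e = e.
Local Notation w := (zigzag e).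

Lemma zigzag_odd j : w j.*2.+1 = iter j.+1 s e.
Proof.
elim: j => [|j IH]; first by rewrite /= sE ge.
move: IH; rewrite doubleS /= !odd_double /= => ->.
by rewrite sE.
Qed.

Lemma zigzag_even j : s (w j.+1.*2) = w j.*2.
Proof. by rewrite doubleS /= odd_double /= sE gK fK. Qed.

Lemma zigzag_even_iter i j : w j.*2 = iter i s (w (i + j).*2).
Proof. by elim: i => [|i IH] //; rewrite iterSr addSn zigzag_even -IH. Qed.

(* Measured from w (2m), the walk takes positions m, m+1, m-1, m+2, ... on the
   cycle of s. *)
Lemma zigzag_iter m k : odd k || (k./2 <= m) ->
  w k = iter (if odd k then m + k./2 + 1 else m - k./2) s (w m.*2).
Proof.
have := odd_double_half k; case: (odd k) => k_eq k_le; rewrite -[in w k]k_eq.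
- rewrite add1n zigzag_odd -[e in iter _ _ e]/(w 0.*2) (zigzag_even_iter m) addn0.
  by rewrite -iterD addn1 addSn addnC.
- by rewrite add0n (zigzag_even_iter (m - k./2)) subnK.
Qed.

Hypothesis full : forall i, porbit s i = [set: 'I_n].

Lemma card_porbit_full i : #|porbit s i| = n.
Proof. by rewrite full cardsT card_ord. Qed.

Lemma zigzag_inj : {in gtn n &, injective w}.
Proof.
move=> i j; rewrite !inE => lt_i lt_j; set m := (n.-1)./2.
rewrite (zigzag_iter (m := m) (k := i)) ?(zigzag_iter (m := m) (k := j));
  try by case: odd; lia.
move/iter_porbit_inj; rewrite card_porbit_full.
have := odd_double_half i; have := odd_double_half j.
by case: (odd i); case: (odd j) => /=; lia.
Qed.

Lemma zigzag_last : w n = w n.-1.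
Proof.
have n_gt0 : 0 < n := leq_ltn_trans (leq0n e) (ltn_ord e).
set m := (n.-1)./2; set b := w m.*2.
have iter_n : iter n s b = b by have := iter_porbit s b; rewrite card_porbit_full.
case/boolP: (odd n) => odd_n.
- rewrite (zigzag_iter (m := m) (k := n)) ?odd_n //.
  rewrite (zigzag_iter (m := m) (k := n.-1)) -/b; last by case: odd; lia.
  have -> : odd n.-1 = false by move: odd_n; rewrite -{1}(prednK n_gt0) /= => /negbTE.
  have -> : m - n.-1./2 = 0 by lia.
  by have -> : m + n./2 + 1 = n by lia.
- have -> : w n = w m.+1.*2 by congr (w _); lia.
  apply: (@perm_inj _ s); rewrite zigzag_even.
  rewrite (zigzag_iter (m := m) (k := n.-1)) -/b; last by case: odd; lia.
  have -> : odd n.-1 = true by move: odd_n; rewrite -{1}(prednK n_gt0) /= negbK.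
  have -> : m + n.-1./2 + 1 = n.-1 by lia.
  by rewrite -iterS prednK.
Qed.

Lemma arcs_disjoint : uniq (arcs f ++ arcs g).
Proof.
rewrite cat_uniq !uniq_arcs andbT /=; apply/hasPn => _ /mem_arcsP[v gv ->].
apply/negP => /mem_arcsP[u fu /esym/arc_involutionE fuE].
have gu_fixed : iter 1 s (g u) = iter 0 s (g u) by rewrite /= sE gK fuE.
have n_gt1 : 1 < n.
  by have := ltn_ord u; have := ltn_ord (f u); move: fu; rewrite -val_eqE /=; lia.
have := iter_porbit_inj _ _ gu_fixed; rewrite card_porbit_full.
by move=> /(_ n_gt1 (ltnW n_gt1)).
Qed.

Lemma zigzag_path_edges : perm_eq (arcs f ++ arcs g) (path_edges w).
Proof.
apply: uniq_perm; [exact: arcs_disjoint | exact: uniq_path_edges zigzag_inj |].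
move=> a; apply/idP/idP.
(* An arc at w i is the step out of w i or the step into it; at the two ends
   of the walk the missing step is a fixed point (ge, zigzag_last). *)
- case/mem_arcs_turnP => c [u [moved ->]].
  have [i lt_i wi] := injective_below_surj zigzag_inj u; subst u.
  case: (eqVneq c (odd i)) => [c_eq | c_neq]; first subst c.
  + have lt_i1 : i.+1 < n.
      rewrite ltn_neqAle lt_i andbT; apply: contraNneq moved => i1_n.
      by rewrite -/(w i.+1) i1_n zigzag_last (_ : n.-1 = i) //; lia.
    by apply/mapP; exists i; rewrite // mem_iota; lia.
  + case: i lt_i c_neq moved => [|i] lt_i c_neq moved.
      by move: c_neq moved; case: c => //= _; rewrite ge eqxx.
    have c_eq : c = odd i by move: c_neq => /=; case: (odd i); case: (c).
    subst c.
    by apply/mapP; exists i; rewrite ?mem_iota /= ?turnK 1?setUC //; lia.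
- case/mapP => k; rewrite mem_iota => /andP[_ lt_k] ->.
  have lt_k1 : k.+1 < n by lia.
  apply: (mem_arcs_turn (b := odd k)); apply/eqP.
  by move/(zigzag_inj lt_k1 (ltnW lt_k1)); lia.
Qed.

End FixedStart.

Section PathToCycle.
Variable w : nat -> 'I_n.
Hypothesis w_inj : {in gtn n &, injective w}.
Hypothesis arcsE : perm_eq (arcs f ++ arcs g) (path_edges w).

Lemma path_edge_turn k : k.+1 < n -> exists c, turn c (w k) = w k.+1.
Proof.
move=> lt_k; have : [set w k; w k.+1] \in path_edges w.
  by apply/mapP; exists k; rewrite // mem_iota; lia.
rewrite -(perm_mem arcsE) => /mem_arcs_turnP[c [u [_ edgeE]]].
by exists c; apply: arc_involutionE (turnK c) edgeE.
Qed.

Lemma path_start_fixed c : 1 < n -> turn c (w 0) = w 1 -> turn (~~ c) (w 0) = w 0.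
Proof.
move=> n_gt1 w01; apply/eqP; apply: contraT => moved.
have : [set w 0; turn (~~ c) (w 0)] \in path_edges w.
  by rewrite -(perm_mem arcsE) mem_arcs_turn.
case/mapP => k; rewrite mem_iota => /andP[_ lt_k].
have lt_k1 : k.+1 < n by lia.
case/set2_inj => [[w0k w01'] | [/(w_inj (ltnW n_gt1) lt_k1) //]].
have k0 : k = 0 by rewrite (w_inj (ltnW lt_k1) (ltnW n_gt1) (esym w0k)).
subst k.
have [fw0 gw0] : f (w 0) = w 1 /\ g (w 0) = w 1 by case: c w01 w01' {moved}.
have w10 : w 1 != w 0 by apply/eqP => /(w_inj lt_k1 (ltnW n_gt1)).
have := perm_uniq arcsE; rewrite uniq_path_edges // cat_uniq => /and3P[_ /hasPn disj _].
have := disj _ (mem_arcs gK (u := w 0) ltac:(by rewrite gw0)).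
by rewrite gw0 -fw0 mem_arcs // fw0.
Qed.

Lemma path_zigzag : g (w 0) = w 0 -> (1 < n -> f (w 0) = w 1) ->
  forall k, k < n -> w k = zigzag (w 0) k.
Proof.
move=> g0 f01.
suff turnE k : k.+1 < n -> w k.+1 = turn (odd k) (w k).
  by elim=> [//|k IH] lt_k; rewrite turnE // IH 1?ltnW.
elim: k => [|k IH] lt_k; first by rewrite /= f01.
have [c wc] := path_edge_turn lt_k.
case: (eqVneq c (odd k)) => [c_eq | c_neq].
  have lt_k1 := ltnW lt_k.
  have := w_inj lt_k (ltnW lt_k1); rewrite -wc c_eq IH // turnK.
  by move=> /(_ erefl); lia.
have -> : odd k.+1 = c by move: c_neq => /=; case: (odd k); case: (c).
by rewrite wc.
Qed.

Lemma path_full : g (w 0) = w 0 -> (1 < n -> f (w 0) = w 1) ->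
  forall i, porbit s i = [set: 'I_n].
Proof.
move=> g0 f01; set b := zigzag (w 0) ((n.-1)./2).*2.
suff orbit_b : porbit s b = [set: 'I_n].
  by move=> i; apply/eqP; rewrite -orbit_b eq_porbit_mem orbit_b inE.
apply/setP => v; rewrite inE; have [k lt_k <-] := injective_below_surj w_inj v.
rewrite path_zigzag // (zigzag_iter g0 (m := (n.-1)./2)) -?permX ?mem_porbit //.
by case: odd; lia.
Qed.

End PathToCycle.
End Zigzag.

Lemma path_edges_iff_full_cycle n (f g : 'I_n -> 'I_n) (s : {perm 'I_n}) :
  0 < n -> involutive f -> involutive g -> (forall i, s i = f (g i)) ->
  (exists2 w, {in gtn n &, injective w} & perm_eq (arcs f ++ arcs g) (path_edges w))
  <-> forall i, porbit s i = [set: 'I_n].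
Proof.
move=> n_gt0 fK gK sE.
have sVE := sVE fK gK sE.
split=> [[w w_inj arcsE] | full].
  have [n_le1 | n_gt1] := leqP n 1.
    move=> i; apply/eqP; rewrite eqEcard subsetT cardsT card_ord.
    by rewrite (leq_trans n_le1) // lt0n card_porbit_neq0.
  have w0_fixed := path_start_fixed fK gK w_inj arcsE n_gt1.
  have [[] w01] := path_edge_turn fK gK arcsE n_gt1.
    move=> i; rewrite -porbitV; apply: (path_full gK fK sVE w_inj).
    - by rewrite perm_catC.
    - exact: w0_fixed w01.
    - by move=> _; apply: w01.
  by apply: (path_full fK gK sE w_inj arcsE (w0_fixed false w01)) => _; apply: w01.
have [e [ge | fe]] : exists e, g e = e \/ f e = e.
  by apply: (porbit_fixpoint fK gK sE (c := Ordinal n_gt0)); rewrite full inE.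
  by exists (zigzag f g e); [apply: zigzag_inj | apply: zigzag_path_edges].
have fullV i : porbit s^-1 i = [set: 'I_n] by rewrite porbitV.
exists (zigzag g f e); first exact: (zigzag_inj gK fK sVE fe fullV).
by rewrite perm_catC; apply: (zigzag_path_edges gK fK sVE fe fullV).
Qed.

Theorem theorem4p5 (n : nat) (x y : seq nat) :
  1 <= n -> sumn x = n -> sumn y = n ->
  (is_path_graph (meander_edges n x y) <-> is_full_cycle (meander_perm n x y)).
Proof.
move=> n_gt0 sx sy.
rewrite /meander_edges !arc_edgesE is_path_graphP //.
apply: path_edges_iff_full_cycle => //; try exact: block_fun_involutive.
by move=> i; rewrite meander_permE.
Qed.
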